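(* For real $r,\omega$ with $\sinh^22r+\sin^22\omega>0$ define $$\rho^{\natural}(r,\omega)=\frac{\cosh2r-\cos2\omega}{\cosh2r+\cos2\omega},$$ and $\theta^{\natural}(r,\omega)$ (mod $2\pi$) by $$\cos\theta^{\natural}=\frac{\sinh^22r-\sin^22\omega}{\sinh^22r+\sin^22\omega},\qquad \sin\theta^{\natural}=\frac{2\sinh2r\sin2\omega}{\sinh^22r+\sin^22\omega}$$ (so that $\tan(\theta^{\natural}/2)=\sin2\omega/\sinh2r$), and for $\phi\in\mathbb{R}$ set $\mathrm{trh}^{\natural}(r,\omega;\phi)=\rho^{\natural}(r,\omega)\cos(\phi+\theta^{\natural}(r,\omega))$. Then for $|r|<1$ and all $i,j\ge0$, uniformly in $\phi$, $$\frac{\partial^{i+j}\,\mathrm{trh}^{\natural}(r,\omega;\phi)}{\partial r^i\partial\omega^j}\ll_{i,j}\frac{\rho^{\natural}(r,\omega)}{(\cosh^22r-\cos^22\omega)^{(i+j)/2}}.$$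
   Context: Note that $\cosh^22r-\cos^22\omega=\sinh^22r+\sin^22\omega$. *)

From Stdlib Require Import Reals ClassicalEpsilon.
From Coquelicot Require Import Coquelicot.
Open Scope R_scope.

Definition rho_nat (r w : R) : R :=
  (cosh (2 * r) - cos (2 * w)) / (cosh (2 * r) + cos (2 * w)).

Definition cos_theta_nat (r w : R) : R :=
  (sinh (2 * r) ^ 2 - sin (2 * w) ^ 2) / (sinh (2 * r) ^ 2 + sin (2 * w) ^ 2).
Definition sin_theta_nat (r w : R) : R :=
  2 * sinh (2 * r) * sin (2 * w) / (sinh (2 * r) ^ 2 + sin (2 * w) ^ 2).

Definition theta_nat (r w : R) : R :=
  epsilon (inhabits 0)
    (fun t => cos t = cos_theta_nat r w /\ sin t = sin_theta_nat r w).

Definition trh_nat (r w phi : R) : R :=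
  rho_nat r w * cos (phi + theta_nat r w).

Definition partial_rw (f : R -> R -> R) (i j : nat) (r w : R) : R :=
  Derive_n (fun r' => Derive_n (fun w' => f r' w') j w) i r.

(* Write T(r,w) = (sinh 2r + i sin 2w) / (cosh 2r + cos 2w), which is tanh (r + i w).
   Then rho^natural = |T|^2 and (cos theta^natural, sin theta^natural) is the direction
   of T^2, so that trh^natural(r,w;phi) = Re (e^{i phi} T^2).  Since
   d T / d r = 1 - T^2 and d T / d w = i (1 - T^2), induction gives
       d^{i+j} trh / dr^i dw^j = Re (e^{i phi} i^j P_{i+j}(T)),
   where P_0 = X^2 and P_{n+1} = P_n' (1 - X^2) is a polynomial of degree <= n + 2.
   With D = cosh 2r + cos 2w we have |1 - T^2| D = 2, |T| D = sqrt (cosh^2 2r - cos^2 2w)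
   and D <= 10 when |r| < 1; these give |P_n(T)| (|T| D)^n <= K_n |T|^2 = K_n rho. *)

From Stdlib Require Import Reals Lra Lia Nsatz ClassicalEpsilon.
From Coquelicot Require Import Coquelicot.
Open Scope R_scope.

Lemma cosh_sq (x : R) : cosh x ^ 2 = 1 + sinh x ^ 2.
Proof.
  unfold cosh, sinh. rewrite exp_Ropp.
  assert (exp x > 0) by apply exp_pos. field. lra.
Qed.

Lemma cosh_ge_1 (x : R) : 1 <= cosh x.
Proof.
  assert (0 < cosh x).
  { unfold cosh. pose proof (exp_pos x). pose proof (exp_pos (- x)). lra. }
  pose proof (cosh_sq x). nra.
Qed.

Lemma cos_sq_add_sin_sq (x : R) : cos x ^ 2 + sin x ^ 2 = 1.
Proof. pose proof (sin2_cos2 x). unfold Rsqr in *. lra. Qed.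

(* Any point of the unit circle is (cos t, sin t) for some real t; this is what
   makes the epsilon-choice in theta_nat meaningful. *)
Lemma angle_of_unit_vector (c s : R) :
  c ^ 2 + s ^ 2 = 1 -> exists t, cos t = c /\ sin t = s.
Proof.
  intros H. assert (Hc : -1 <= c <= 1) by nra.
  assert (Hs : sqrt (1 - c²) = Rabs s).
  { rewrite <- sqrt_Rsqr_abs. f_equal. unfold Rsqr. nra. }
  destruct (Rle_or_lt 0 s) as [Hs0 | Hs0].
  - exists (acos c). rewrite cos_acos, sin_acos, Hs, Rabs_pos_eq; auto.
  - exists (- acos c). rewrite cos_neg, sin_neg, cos_acos, sin_acos, Hs, Rabs_left; auto.
    split; [reflexivity | ring].
Qed.

Definition den (r w : R) : R := cosh (2 * r) + cos (2 * w).
Definition regular (r w : R) : Prop := 0 < sinh (2 * r) ^ 2 + sin (2 * w) ^ 2.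

Lemma den_mul_conj (r w : R) :
  den r w * (cosh (2 * r) - cos (2 * w)) = sinh (2 * r) ^ 2 + sin (2 * w) ^ 2.
Proof.
  unfold den. pose proof (cosh_sq (2 * r)). pose proof (cos_sq_add_sin_sq (2 * w)). nra.
Qed.

Lemma den_pos_and_conj_pos (r w : R) :
  regular r w -> 0 < den r w /\ 0 < cosh (2 * r) - cos (2 * w).
Proof.
  unfold regular. intros H. pose proof (den_mul_conj r w).
  pose proof (cosh_ge_1 (2 * r)). pose proof (COS_bound (2 * w)).
  unfold den in *. split; nra.
Qed.

Lemma den_le_10 (r w : R) : Rabs r < 1 -> den r w <= 10.
Proof.
  intros Hr. apply Rabs_def2 in Hr. unfold den, cosh.
  pose proof (COS_bound (2 * w)).
  assert (exp 2 <= 9).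
  { replace 2 with (1 + 1) by ring. rewrite exp_plus.
    pose proof exp_le_3. pose proof (exp_pos 1). nra. }
  assert (exp (2 * r) <= exp 2) by (apply Rlt_le, exp_increasing; lra).
  assert (exp (- (2 * r)) <= exp 2) by (apply Rlt_le, exp_increasing; lra).
  lra.
Qed.

(* T(r,w) = tanh (r + i w). *)
Definition tanhC (r w : R) : C := (sinh (2 * r) / den r w, sin (2 * w) / den r w).

Lemma Cmod_tanhC_sq (r w : R) : regular r w -> Cmod (tanhC r w) ^ 2 = rho_nat r w.
Proof.
  intros HP. destruct (den_pos_and_conj_pos r w HP) as [HD HM].
  pose proof (den_mul_conj r w).
  rewrite Cmod2_alt. unfold tanhC, rho_nat; simpl Re; simpl Im.
  unfold den in *. field_simplify_eq; [nra | lra].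
Qed.

Lemma Cmod_tanhC_pos (r w : R) : regular r w -> 0 < Cmod (tanhC r w).
Proof.
  intros HP. destruct (den_pos_and_conj_pos r w HP) as [HD HM].
  assert (Hrho : 0 < rho_nat r w) by (unfold rho_nat, den in *; apply Rdiv_lt_0_compat; lra).
  rewrite <- (Cmod_tanhC_sq r w HP) in Hrho. pose proof (Cmod_ge_0 (tanhC r w)). nra.
Qed.

Lemma Cmod_sech_sq_den (r w : R) :
  regular r w -> Cmod (1 - tanhC r w * tanhC r w)%C * den r w = 2.
Proof.
  intros HP. destruct (den_pos_and_conj_pos r w HP) as [HD _].
  assert (E : Cmod (1 - tanhC r w * tanhC r w)%C ^ 2 = (2 / den r w) ^ 2).
  { pose proof (cosh_sq (2 * r)) as Hch. pose proof (cos_sq_add_sin_sq (2 * w)) as Hcs.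
    rewrite Cmod2_alt. unfold tanhC, Cminus, Cplus, Copp, Cmult; simpl.
    unfold den in *. field_simplify_eq; [ | lra].
    revert Hch Hcs. generalize (cosh (2 * r)) (sinh (2 * r)) (cos (2 * w)) (sin (2 * w)).
    intros a b c d H1 H2. cbn [pow] in *. nsatz. }
  rewrite <- (sqrt_pow2 (Cmod _)) by apply Cmod_ge_0.
  rewrite E, sqrt_pow2 by (apply Rlt_le, Rdiv_lt_0_compat; lra).
  field. lra.
Qed.

Lemma rho_mul_den_sq (r w : R) :
  regular r w -> rho_nat r w * den r w ^ 2 = cosh (2 * r) ^ 2 - cos (2 * w) ^ 2.
Proof.
  intros HP. destruct (den_pos_and_conj_pos r w HP) as [HD _].
  unfold rho_nat. unfold den in *. field. lra.
Qed.

Lemma trh_nat_as_re (r w phi : R) :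
  regular r w -> trh_nat r w phi = Re ((cos phi, sin phi) * (tanhC r w * tanhC r w))%C.
Proof.
  intros HP. destruct (den_pos_and_conj_pos r w HP) as [HD HM].
  pose proof (cosh_sq (2 * r)) as Hch. pose proof (cos_sq_add_sin_sq (2 * w)) as Hcs.
  unfold trh_nat, theta_nat.
  destruct (epsilon_spec (inhabits 0)
    (fun t => cos t = cos_theta_nat r w /\ sin t = sin_theta_nat r w)) as [Ec Es].
  { apply angle_of_unit_vector. unfold cos_theta_nat, sin_theta_nat.
    unfold regular in HP. field_simplify_eq; [ring | lra]. }
  rewrite cos_plus, Ec, Es.
  unfold rho_nat, cos_theta_nat, sin_theta_nat, tanhC; simpl.
  unfold regular, den in *.
  field_simplify_eq.
  - rewrite Hch. replace (cos (2 * w) ^ 2) with (1 - sin (2 * w) ^ 2) by lra. ring.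
  - repeat split; lra.
Qed.

Definition is_derive_C (f : R -> C) (x : R) (l : C) : Prop :=
  is_derive (fun t => Re (f t)) x (Re l) /\ is_derive (fun t => Im (f t)) x (Im l).

Lemma is_derive_C_const (c : C) (x : R) : is_derive_C (fun _ => c) x 0%C.
Proof. split; simpl; apply (is_derive_const (_ : R)). Qed.

Lemma is_derive_C_plus (f g : R -> C) (x : R) (a b : C) :
  is_derive_C f x a -> is_derive_C g x b -> is_derive_C (fun t => f t + g t)%C x (a + b)%C.
Proof.
  intros [Hf1 Hf2] [Hg1 Hg2]; split; simpl.
  - apply (is_derive_plus (fun t => Re (f t)) (fun t => Re (g t))); auto.
  - apply (is_derive_plus (fun t => Im (f t)) (fun t => Im (g t))); auto.
Qed.

Lemma is_derive_Rmult (f g : R -> R) (x a b : R) :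
  is_derive f x a -> is_derive g x b -> is_derive (fun t => f t * g t) x (a * g x + f x * b).
Proof. intros. apply (is_derive_mult f g); auto. intros; apply Rmult_comm. Qed.

Lemma is_derive_C_mult (f g : R -> C) (x : R) (a b : C) :
  is_derive_C f x a -> is_derive_C g x b ->
  is_derive_C (fun t => f t * g t)%C x (a * g x + f x * b)%C.
Proof.
  intros [Hf1 Hf2] [Hg1 Hg2]; split.
  - apply (is_derive_ext (fun t => Re (f t) * Re (g t) - Im (f t) * Im (g t))).
    { intros t. symmetry. apply re_mult. }
    replace (Re (a * g x + f x * b)%C) with ((Re a * Re (g x) + Re (f x) * Re b)
      - (Im a * Im (g x) + Im (f x) * Im b)) by (unfold Re, Im; simpl; ring).
    apply (is_derive_minus (fun t => Re (f t) * Re (g t)) (fun t => Im (f t) * Im (g t)));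
      apply is_derive_Rmult; auto.
  - apply (is_derive_ext (fun t => Re (f t) * Im (g t) + Im (f t) * Re (g t))).
    { intros t. symmetry. apply im_mult. }
    replace (Im (a * g x + f x * b)%C) with ((Re a * Im (g x) + Re (f x) * Im b)
      + (Im a * Re (g x) + Im (f x) * Re b)) by (unfold Re, Im; simpl; ring).
    apply (is_derive_plus (fun t => Re (f t) * Im (g t)) (fun t => Im (f t) * Re (g t)));
      apply is_derive_Rmult; auto.
Qed.

(* Polynomials with complex coefficients as coefficient lists (constant term first),
   evaluated by Horner's rule. *)
Fixpoint peval (Q : list C) (z : C) : C :=
  match Q with nil => 0%C | c :: Q' => (c + z * peval Q' z)%C end.

Fixpoint padd (A B : list C) : list C :=
  match A, B with
  | nil, _ => B
  | _, nil => A
  | a :: A', b :: B' => (a + b)%C :: padd A' B'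
  end.

(* Formal derivative: (c + X Q)' = Q + X Q'; a constant has derivative nil, so that
   the length drops by one. *)
Fixpoint pder (Q : list C) : list C :=
  match Q with
  | nil => nil
  | _ :: Q' => match Q' with nil => nil | _ => padd Q' (RtoC 0 :: pder Q') end
  end.

Definition mul_one_sub_sq (Q : list C) : list C := padd Q (RtoC 0 :: RtoC 0 :: map Copp Q).

Fixpoint deriv_poly (n : nat) : list C :=
  match n with
  | O => RtoC 0 :: RtoC 0 :: RtoC 1 :: nil
  | S n => mul_one_sub_sq (pder (deriv_poly n))
  end.

Lemma peval_padd (A B : list C) (z : C) :
  peval (padd A B) z = (peval A z + peval B z)%C.
Proof.
  revert B; induction A as [|a A IH]; intros [|b B]; simpl; try ring.
  rewrite IH. ring.
Qed.

Lemma peval_mul_one_sub_sq (Q : list C) (z : C) :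
  peval (mul_one_sub_sq Q) z = (peval Q z * (1 - z * z))%C.
Proof.
  unfold mul_one_sub_sq. rewrite peval_padd. simpl.
  assert (E : peval (map Copp Q) z = (- peval Q z)%C).
  { induction Q as [|c Q IH]; simpl; [ring | rewrite IH; ring]. }
  rewrite E. ring.
Qed.

Lemma is_derive_C_peval (Q : list C) (f : R -> C) (x : R) (d : C) :
  is_derive_C f x d -> is_derive_C (fun t => peval Q (f t)) x (peval (pder Q) (f x) * d)%C.
Proof.
  intros Hf. induction Q as [|c Q IH]; cbn [peval].
  - simpl. replace (0 * d)%C with (RtoC 0) by ring. apply is_derive_C_const.
  - replace (peval (pder (c :: Q)) (f x) * d)%C
      with (0 + (d * peval Q (f x) + f x * (peval (pder Q) (f x) * d)))%C.
    + apply is_derive_C_plus; [apply is_derive_C_const | apply is_derive_C_mult; auto].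
    + destruct Q as [|c' Q']; [simpl; ring |].
      cbn [pder]. rewrite peval_padd. cbn [peval]. ring.
Qed.

Lemma is_derive_tanhC_r (r w : R) :
  regular r w -> is_derive_C (fun r => tanhC r w) r (1 - tanhC r w * tanhC r w)%C.
Proof.
  intros HP. destruct (den_pos_and_conj_pos r w HP) as [HD _].
  pose proof (cosh_sq (2 * r)). pose proof (cos_sq_add_sin_sq (2 * w)).
  unfold den in HD.
  split; unfold tanhC, den; simpl; auto_derive; try lra; field_simplify_eq; try nsatz; lra.
Qed.

Lemma is_derive_tanhC_w (r w : R) :
  regular r w -> is_derive_C (fun w => tanhC r w) w (Ci * (1 - tanhC r w * tanhC r w))%C.
Proof.
  intros HP. destruct (den_pos_and_conj_pos r w HP) as [HD _].
  pose proof (cosh_sq (2 * r)). pose proof (cos_sq_add_sin_sq (2 * w)).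
  unfold den in HD.
  split; unfold tanhC, den; simpl; auto_derive; try lra; field_simplify_eq; try nsatz; lra.
Qed.

Definition re_poly_T (c : C) (Q : list C) (r w : R) : R := Re (c * peval Q (tanhC r w))%C.

Lemma is_derive_re_poly_T_r (c : C) (Q : list C) (r w : R) : regular r w ->
  is_derive (fun r => re_poly_T c Q r w) r (re_poly_T c (mul_one_sub_sq (pder Q)) r w).
Proof.
  intros HP. unfold re_poly_T. rewrite peval_mul_one_sub_sq.
  destruct (is_derive_C_mult (fun _ => c) _ r 0%C _ (is_derive_C_const c r)
              (is_derive_C_peval Q _ _ _ (is_derive_tanhC_r r w HP))) as [H _].
  replace (Re (c * _))%C with (Re (0 * peval Q (tanhC r w)
    + c * (peval (pder Q) (tanhC r w) * (1 - tanhC r w * tanhC r w))))%C.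
  - exact H.
  - f_equal. ring.
Qed.

Lemma is_derive_re_poly_T_w (c : C) (Q : list C) (r w : R) : regular r w ->
  is_derive (fun w => re_poly_T c Q r w) w (re_poly_T (c * Ci) (mul_one_sub_sq (pder Q)) r w).
Proof.
  intros HP. unfold re_poly_T. rewrite peval_mul_one_sub_sq.
  destruct (is_derive_C_mult (fun _ => c) _ w 0%C _ (is_derive_C_const c w)
              (is_derive_C_peval Q _ _ _ (is_derive_tanhC_w r w HP))) as [H _].
  replace (Re (c * Ci * _))%C with (Re (0 * peval Q (tanhC r w)
    + c * (peval (pder Q) (tanhC r w) * (Ci * (1 - tanhC r w * tanhC r w)))))%C.
  - exact H.
  - f_equal. ring.
Qed.

Lemma Derive_n_of_family (P : R -> Prop) (P_open : forall x, P x -> locally x P)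
  (G : nat -> R -> R) (HG : forall k x, P x -> is_derive (G k) x (G (S k) x))
  (f : R -> R) (Hf : forall x, P x -> f x = G O x) :
  forall n x, P x -> Derive_n f n x = G n x.
Proof.
  induction n as [|n IH]; intros x Hx; simpl; auto.
  rewrite (Derive_ext_loc _ (G n)).
  - apply is_derive_unique. auto.
  - apply (filter_imp P); auto.
Qed.

Lemma locally_pos_of_derivable (f : R -> R) (x : R) :
  ex_derive f x -> 0 < f x -> locally x (fun y => 0 < f y).
Proof.
  intros Hd Hp. apply ex_derive_continuous in Hd.
  apply Hd. exists (mkposreal _ Hp). intros y Hy. simpl in *.
  unfold ball in Hy; simpl in Hy; unfold AbsRing_ball, abs, minus, plus, opp in Hy; simpl in Hy.
  apply Rabs_def2 in Hy. lra.
Qed.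

Lemma regular_locally_r (r w : R) : regular r w -> locally r (fun r' => regular r' w).
Proof.
  intros H. apply (locally_pos_of_derivable (fun r' => sinh (2 * r') ^ 2 + sin (2 * w) ^ 2));
    auto. auto_derive; auto.
Qed.

Lemma regular_locally_w (r w : R) : regular r w -> locally w (fun w' => regular r w').
Proof.
  intros H. apply (locally_pos_of_derivable (fun w' => sinh (2 * r) ^ 2 + sin (2 * w') ^ 2));
    auto. auto_derive; auto.
Qed.

Lemma partial_rw_trh_nat (i j : nat) (r w phi : R) : regular r w ->
  partial_rw (fun r' w' => trh_nat r' w' phi) i j r w
  = re_poly_T ((cos phi, sin phi) * Ci ^ j)%C (deriv_poly (i + j)) r w.
Proof.
  intros HP. unfold partial_rw. rewrite Nat.add_comm.
  apply (Derive_n_of_family (fun r => regular r w) (fun r H => regular_locally_r r w H)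
           (fun k r => re_poly_T ((cos phi, sin phi) * Ci ^ j)%C (deriv_poly (j + k)) r w));
    auto.
  - intros k x Hx. rewrite Nat.add_succ_r. apply is_derive_re_poly_T_r; auto.
  - intros r' Hr'. rewrite Nat.add_0_r.
    apply (Derive_n_of_family (fun w => regular r' w) (regular_locally_w r')
             (fun k w => re_poly_T ((cos phi, sin phi) * Ci ^ k)%C (deriv_poly k) r' w));
      auto.
    + intros k x Hx. replace ((cos phi, sin phi) * Ci ^ S k)%C
        with ((cos phi, sin phi) * Ci ^ k * Ci)%C by (simpl; ring).
      apply is_derive_re_poly_T_w; auto.
    + intros x Hx. rewrite trh_nat_as_re by auto.
      unfold re_poly_T. f_equal. simpl. ring.
Qed.

Lemma length_padd (A B : list C) : length (padd A B) = Nat.max (length A) (length B).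
Proof. revert B; induction A; intros [|b B]; simpl; auto. Qed.

Lemma length_pder (Q : list C) : (length (pder Q) <= pred (length Q))%nat.
Proof.
  induction Q as [|c [|c' Q'] IH]; simpl; try lia.
  rewrite length_padd. simpl in *. lia.
Qed.

Lemma length_deriv_poly (n : nat) : (length (deriv_poly n) <= n + 3)%nat.
Proof.
  induction n; simpl; [lia |].
  unfold mul_one_sub_sq. rewrite length_padd. simpl. rewrite length_map.
  pose proof (length_pder (deriv_poly n)). lia.
Qed.

Fixpoint coef_norm (Q : list C) : R :=
  match Q with nil => 0 | c :: Q => Cmod c + coef_norm Q end.

Lemma coef_norm_nonneg (Q : list C) : 0 <= coef_norm Q.
Proof. induction Q; simpl; [lra | pose proof (Cmod_ge_0 a); lra]. Qed.

Lemma peval_bound (Q : list C) (z : C) :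
  Cmod (peval Q z) <= coef_norm Q * (1 + Cmod z) ^ (pred (length Q)).
Proof.
  induction Q as [|c [|c' Q'] IH]; simpl in *.
  - rewrite Cmod_0. lra.
  - replace (c + z * 0)%C with c by ring. lra.
  - set (p := (1 + Cmod z) ^ length Q') in *.
    pose proof (Cmod_ge_0 z). pose proof (Cmod_ge_0 c).
    pose proof (coef_norm_nonneg (c' :: Q')). simpl in H1.
    assert (1 <= p) by (apply pow_R1_Rle; lra).
    eapply Rle_trans; [apply Cmod_triangle |]. rewrite Cmod_mult.
    assert (Cmod z * Cmod (c' + z * peval Q' z)%C <= Cmod z * ((Cmod c' + coef_norm Q') * p))
      by (apply Rmult_le_compat_l; auto).
    assert (0 <= Cmod c * ((1 + Cmod z) * p - 1)) by (apply Rmult_le_pos; nra).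
    nra.
Qed.

(* If |1 - z^2| D = 2 and 0 < D <= M with M >= 1, then (1 + |z|)^2 D <= 9 M:
   for |z| <= 2 this is clear, and otherwise (1 + |z|)^2 <= 3 (|z|^2 - 1) <= 3 |1 - z^2|. *)
Lemma one_add_Cmod_sq_den (z : C) (D M : R) :
  0 < D -> D <= M -> 1 <= M -> Cmod (1 - z * z)%C * D = 2 -> (1 + Cmod z) ^ 2 * D <= 9 * M.
Proof.
  intros HD HDM HM Hu.
  assert (Ht2 : Cmod z ^ 2 <= 1 + Cmod (1 - z * z)%C).
  { replace (Cmod z ^ 2) with (Cmod (1 - (1 - z * z))%C).
    - eapply Rle_trans; [apply Cmod_triangle |]. rewrite Cmod_opp, Cmod_1. lra.
    - replace (1 - (1 - z * z))%C with (z * z)%C by ring. rewrite Cmod_mult. ring. }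
  pose proof (Cmod_ge_0 z).
  set (t := Cmod z) in *. set (u := Cmod (1 - z * z)%C) in *.
  destruct (Rle_or_lt t 2).
  - assert ((1 + t) ^ 2 <= 9) by nra. nra.
  - assert ((1 + t) ^ 2 <= 3 * (t ^ 2 - 1)) by nra. nra.
Qed.

Lemma scaled_peval_bound (Q : list C) (m : nat) (z : C) (D M : R) :
  (length Q <= m + 5)%nat -> 0 < D -> D <= M -> 1 <= M -> Cmod (1 - z * z)%C * D = 2 ->
  Cmod (peval Q z) * (Cmod z * D) ^ (m + 2) <= coef_norm Q * (9 * M) ^ (m + 2) * Cmod z ^ 2.
Proof.
  intros HQ HD HDM HM Hu.
  pose proof (one_add_Cmod_sq_den z D M HD HDM HM Hu) as Hs2D.
  pose proof (Cmod_ge_0 z). pose proof (coef_norm_nonneg Q).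
  set (t := Cmod z) in *. set (s := 1 + t) in *. set (A := coef_norm Q) in *.
  assert (HP : Cmod (peval Q z) <= A * s ^ (m + 4)).
  { eapply Rle_trans; [apply peval_bound |]. apply Rmult_le_compat_l; auto.
    apply Rle_pow; [unfold s; lra | lia]. }
  assert (E : (t * D) ^ (m + 2) = t ^ 2 * (t ^ m * D ^ (m + 2))).
  { rewrite Rpow_mult_distr, pow_add. ring. }
  assert (Es : s ^ (m + 4) * s ^ m = (s ^ 2) ^ (m + 2)).
  { rewrite <- pow_add, <- pow_mult. f_equal. lia. }
  assert (Htm : t ^ m <= s ^ m) by (apply pow_incr; unfold s; lra).
  assert (Hq : (s ^ 2) ^ (m + 2) * D ^ (m + 2) <= (9 * M) ^ (m + 2)).
  { rewrite <- Rpow_mult_distr. apply pow_incr. split; [| exact Hs2D].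
    apply Rmult_le_pos; [apply pow_le; unfold s; lra | lra]. }
  assert (0 <= (t * D) ^ (m + 2)) by (apply pow_le; apply Rmult_le_pos; lra).
  assert (0 <= s ^ (m + 4)) by (apply pow_le; unfold s; lra).
  assert (0 <= D ^ (m + 2)) by (apply pow_le; lra).
  assert (0 <= t ^ 2) by (apply pow_le; lra).
  apply Rle_trans with (A * s ^ (m + 4) * (t * D) ^ (m + 2)).
  { apply Rmult_le_compat_r; auto. }
  rewrite E.
  apply Rle_trans with (A * t ^ 2 * (s ^ (m + 4) * s ^ m * D ^ (m + 2))).
  { replace (A * s ^ (m + 4) * (t ^ 2 * (t ^ m * D ^ (m + 2))))
      with (A * t ^ 2 * (s ^ (m + 4) * (t ^ m * D ^ (m + 2)))) by ring.
    apply Rmult_le_compat_l; [apply Rmult_le_pos; auto |].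
    rewrite Rmult_assoc. apply Rmult_le_compat_l; auto. apply Rmult_le_compat_r; auto. }
  rewrite Es. replace (A * (9 * M) ^ (m + 2) * t ^ 2) with (A * t ^ 2 * (9 * M) ^ (m + 2)) by ring.
  apply Rmult_le_compat_l; [apply Rmult_le_pos; auto | exact Hq].
Qed.

Lemma deriv_poly_bound (M : R) (n : nat) : 1 <= M ->
  exists K, 0 <= K /\ forall z D, 0 < D -> D <= M -> Cmod (1 - z * z)%C * D = 2 ->
    Cmod (peval (deriv_poly n) z) * (Cmod z * D) ^ n <= K * Cmod z ^ 2.
Proof.
  intros HM. destruct n as [|[|m]].
  - exists 1. split; [lra |]. intros z D _ _ _.
    replace (peval (deriv_poly 0) z) with (z * z)%C by (simpl; ring).
    rewrite Cmod_mult. simpl. lra.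
  - exists 4. split; [lra |]. intros z D _ _ Hu.
    replace (peval (deriv_poly 1) z) with (2 * z * (1 - z * z))%C by (simpl; ring).
    rewrite !Cmod_mult, Cmod_R, Rabs_pos_eq by lra.
    replace (2 * Cmod z * Cmod (1 - z * z)%C * (Cmod z * D) ^ 1)
      with (2 * Cmod z ^ 2 * (Cmod (1 - z * z)%C * D)) by ring.
    rewrite Hu. lra.
  - exists (coef_norm (deriv_poly (S (S m))) * (9 * M) ^ (m + 2)). split.
    { apply Rmult_le_pos; [apply coef_norm_nonneg | apply pow_le; lra]. }
    intros z D HD HDM Hu. replace (S (S m)) with (m + 2)%nat at 2 by lia.
    apply scaled_peval_bound; auto.
    eapply Nat.le_trans; [apply length_deriv_poly | lia].
Qed.

Lemma Rpower_sq_half (x : R) (n : nat) : 0 < x -> Rpower (x ^ 2) (INR n / 2) = x ^ n.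
Proof.
  intros Hx.
  replace (INR n / 2) with (/ 2 * INR n) by (unfold Rdiv; ring).
  rewrite <- Rpower_mult, Rpower_sqrt by (apply pow_lt; lra).
  rewrite sqrt_pow2 by lra. apply Rpower_pow; lra.
Qed.

Lemma Rabs_re_unimodular (c z : C) : Cmod c = 1 -> Rabs (Re (c * z)%C) <= Cmod z.
Proof. intros Hc. eapply Rle_trans; [apply re_le_Cmod |]. rewrite Cmod_mult, Hc. lra. Qed.

Lemma Cmod_rotation (phi : R) (j : nat) : Cmod ((cos phi, sin phi) * Ci ^ j)%C = 1.
Proof.
  rewrite Cmod_mult, Cmod_pow.
  assert (Hphi : Cmod (cos phi, sin phi) = 1).
  { unfold Cmod. simpl fst; simpl snd. rewrite cos_sq_add_sin_sq. apply sqrt_1. }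
  assert (Hi : Cmod Ci = 1).
  { unfold Cmod, Ci; simpl. replace (0 * (0 * 1) + 1 * (1 * 1)) with 1 by ring. apply sqrt_1. }
  rewrite Hphi, Hi, pow1. ring.
Qed.

Theorem mainTheorem7 :
  forall i j : nat, exists C : R, 0 <= C /\
    forall r w phi : R,
      Rabs r < 1 ->
      0 < sinh (2 * r) ^ 2 + sin (2 * w) ^ 2 ->
      Rabs (partial_rw (fun r' w' => trh_nat r' w' phi) i j r w)
        <= C * rho_nat r w /
           Rpower (cosh (2 * r) ^ 2 - cos (2 * w) ^ 2) (INR (i + j) / 2).
Proof.
  intros i j. destruct (deriv_poly_bound 10 (i + j)) as [K [HK Hbound]]; [lra |].
  exists K. split; auto. intros r w phi Hr HP. change (regular r w) in HP.
  pose proof (proj1 (den_pos_and_conj_pos r w HP)) as HD.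
  set (T := tanhC r w). set (D := den r w).
  assert (Hrho : Cmod T ^ 2 = rho_nat r w) by apply (Cmod_tanhC_sq r w HP).
  assert (HT : 0 < Cmod T) by apply (Cmod_tanhC_pos r w HP).
  assert (HTD : 0 < Cmod T * D) by (apply Rmult_lt_0_compat; auto).
  rewrite <- (rho_mul_den_sq r w HP), <- Hrho, <- Rpow_mult_distr, Rpower_sq_half by auto.
  rewrite partial_rw_trh_nat by auto. unfold re_poly_T.
  eapply Rle_trans; [apply Rabs_re_unimodular, Cmod_rotation |].
  apply Rmult_le_reg_r with ((Cmod T * D) ^ (i + j)); [apply pow_lt; auto |].
  unfold Rdiv. rewrite Rmult_assoc, Rinv_l, Rmult_1_r by (apply pow_nonzero; lra).
  apply Hbound; auto.
  - apply den_le_10; auto.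
  - apply Cmod_sech_sq_den; auto.
Qed.
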